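(* Let $E$, $F$ be locally convex spaces and let $\phi_{1},\phi_{2}:E\times F\to\overline{\mathbb{R}}$ be proper convex functions. Define $\rho:E\times F\to\overline{\mathbb{R}}$ by $\rho(x,y):=\inf\{\phi_{1}(x,y_{1})+\phi_{2}(x,y_{2})\mid y_{1}+y_{2}=y\}$. Assume there exists $(x_{0},y_{0})\in\operatorname{dom}\phi_{2}$ such that $x_{0}\in\operatorname{Pr}_{E}(\operatorname{dom}\phi_{1})$ and $\phi_{2}(\cdot,y_{0})$ is continuous at $x_{0}$. Then for every $x^{*}\in E^{*}$, $y^{*}\in F^{*}$, \[\rho^{*}(x^{*},y^{*})=\min\{\phi_{1}^{*}(x_{1}^{*},y^{*})+\phi_{2}^{*}(x_{2}^{*},y^{*})\mid x_{1}^{*},x_2^*\in E^*,\ x_{1}^{*}+x_{2}^{*}=x^{*}\},\] where ''$\min$'' denotes an infimum that is attained when it is finite.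
   Context: Locally convex spaces are Hausdorff; $E^*,F^*$ are topological duals and the conjugate of $f:E\times F\to\overline{\mathbb R}$ is $f^*(x^*,y^* )=\sup\{\langle x,x^*\rangle+\langle y,y^*\rangle-f(x,y)\}$. $\operatorname{dom}\phi=\{\phi<\infty\}$; $\operatorname{Pr}_E$ is the projection onto $E$; proper means not identically $+\infty$ and never $-\infty$. *)

From HB Require Import structures.
From mathcomp Require Import all_boot all_order all_algebra.
From mathcomp Require Import all_classical all_reals all_analysis.
Set Implicit Arguments. Unset Strict Implicit. Unset Printing Implicit Defensive.
Import Order.TTheory GRing.Theory Num.Theory.
Import numFieldTopology.Exports numFieldNormedType.Exports.
Local Open Scope classical_set_scope.
Local Open Scope ring_scope.

Definition is_dual (R : realType) (E : tvsType R) (f : E -> R) : Prop :=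
  (forall (a : R) (u v : E), f (a *: u + v) = a * f u + f v) /\ continuous f.

Definition proper_fun (T : Type) (R : realType) (f : T -> \bar R) : Prop :=
  (exists p, (f p < +oo)%E) /\ (forall p, (-oo < f p)%E).

Definition convex_ext (R : realType) (E F : tvsType R) (f : E * F -> \bar R) :=
  forall (p q : E * F) (l : R), 0 < l < 1 ->
    (f ((l *: p.1 + (1 - l) *: q.1)%R, (l *: p.2 + (1 - l) *: q.2)%R)
      <= l%:E * f p + (1 - l)%R%:E * f q)%E.

Definition conj2 (R : realType) (E F : tvsType R) (f : E * F -> \bar R)
  (xs : E -> R) (ys : F -> R) : \bar R :=
  ereal_sup [set ((xs p.1 + ys p.2)%:E - f p)%E | p in [set: E * F]].

Definition infconv2 (R : realType) (E F : tvsType R) (phi1 phi2 : E * F -> \bar R)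
  (p : E * F) : \bar R :=
  ereal_inf [set z | exists y1 y2 : F,
                 (y1 + y2 = p.2)%R /\ z = (phi1 (p.1, y1) + phi2 (p.1, y2))%E].

From HB Require Import structures.
From mathcomp Require Import all_boot all_order all_algebra.
From mathcomp Require Import all_classical all_reals all_analysis.
From mathcomp Require Import ring lra.
Import Order.TTheory GRing.Theory Num.Theory.
Import numFieldTopology.Exports numFieldNormedType.Exports.
Local Open Scope classical_set_scope.
Local Open Scope ring_scope.
Set Implicit Arguments. Unset Strict Implicit. Unset Printing Implicit Defensive.

(* Weak duality is the Fenchel-Young inequality.  Conversely, when [l], the value of
   the conjugate of [rho] at [(xs, ys)], is finite, the set of all [(u - v, s)] with
   [s >= phi1 (u, y1) - ys y1 + phi2 (v, y2) - ys y2 - xs v + l] is convex, contains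
   no [(0, s)] with [s < 0] by definition of [l], and is bounded above on a
   neighbourhood of [0] by the continuity of [phi2 (., y0)] at [x0]; in particular it
   absorbs every direction.  Its gauge is then a real sublinear functional, and
   Hahn-Banach gives a linear [x1] below the set, continuous because it is bounded
   above near [0]; the pair [(x1, xs - x1)] attains [l]. *)

Section HahnBanach.
Variables (R : realType) (V : lmodType R) (p : V -> R).
Hypothesis p_subadd : forall x y, p (x + y) <= p x + p y.
Hypothesis p_posZ : forall t x, 0 < t -> p (t *: x) <= t * p x.

Let p0 : p 0 = 0.
Proof.
have := @p_posZ 2^-1 0; rewrite invr_gt0 ltr0n scaler0 => /(_ isT).
have := p_subadd 0 0; rewrite addr0; lra.
Qed.

Let p_posZE t x : 0 < t -> p (t *: x) = t * p x.
Proof.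
move=> t0; apply/eqP; rewrite eq_le p_posZ //=.
have := @p_posZ t^-1 (t *: x); rewrite invr_gt0 t0 scalerA mulVf ?gt_eqF // scale1r.
by move=> /(_ isT); rewrite ler_pdivlMl.
Qed.

(* Graphs of linear forms, defined on subspaces of [V], that are dominated by [p]. *)
Definition dominated_subspace (G : set (V * R)) :=
  (forall a x r y s, G (x, r) -> G (y, s) -> G (a *: x + y, a * r + s)) /\
  (forall x r, G (x, r) -> r <= p x).

Lemma dominated_subspace_functional G x r r' :
  dominated_subspace G -> G (x, r) -> G (x, r') -> r = r'.
Proof.
move=> [Gcl Gdom] Gr Gr'.
have := Gdom _ _ (Gcl (-1) _ _ _ _ Gr Gr'); have := Gdom _ _ (Gcl (-1) _ _ _ _ Gr' Gr).
rewrite scaleN1r addNr p0; lra.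
Qed.

Lemma dominated_subspace_gap G z : dominated_subspace G -> G (0, 0) ->
  exists c, forall x r, G (x, r) -> r - p (x - z) <= c /\ c <= p (x + z) - r.
Proof.
move=> [Gcl Gdom] G0.
have gap x r y s : G (x, r) -> G (y, s) -> s - p (y - z) <= p (x + z) - r.
  move=> Gxr Gys; have := Gdom _ _ (Gcl 1 _ _ _ _ Gxr Gys).
  have := p_subadd (x + z) (y - z); rewrite addrACA subrr addr0 scale1r mul1r; lra.
pose L := [set u | exists y s, G (y, s) /\ u = s - p (y - z)].
have Lub x r : G (x, r) -> ubound L (p (x + z) - r).
  by move=> Gxr _ [y [s [Gys ->]]]; exact: gap.
exists (sup L) => x r Gxr; split.
  by apply: ub_le_sup; [exists (p (0 + z) - 0); exact: Lub | exists x, r].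
by apply: ge_sup; [exists (r - p (x - z)), x, r | exact: Lub].
Qed.

Lemma dominated_subspace_extend G z : dominated_subspace G -> G (0, 0) ->
  exists B, [/\ dominated_subspace B, G `<=` B & exists c, B (z, c)].
Proof.
move=> [Gcl Gdom] G0; have [c gap] := dominated_subspace_gap z (conj Gcl Gdom) G0.
have GV x r t : 0 < t -> G (x, r) -> G (t^-1 *: x, t^-1 * r).
  by move=> t0 Gxr; have := Gcl t^-1 _ _ _ _ Gxr G0; rewrite !addr0.
exists [set q | exists x r t, G (x, r) /\ q = (x + t *: z, r + t * c)]; split.
- split.
    move=> a _ _ _ _ [x [r [t [Gxr [-> ->]]]]] [y [s [t' [Gys [-> ->]]]]].
    exists (a *: x + y), (a * r + s), (a * t + t'); split; first exact: Gcl.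
    congr pair; first by rewrite scalerDr scalerDl scalerA addrACA.
    by rewrite mulrDr mulrDl mulrA addrACA.
  move=> _ _ [x [r [t [Gxr [-> ->]]]]].
  have [t0|t0|->] := ltgtP t 0; last by rewrite scale0r mul0r !addr0; exact: Gdom.
    have Nt0 : 0 < - t by rewrite oppr_gt0.
    have [+ _] := gap _ _ (GV _ _ _ Nt0 Gxr).
    have -> : (- t)^-1 *: x - z = (- t)^-1 *: (x + t *: z).
      by rewrite scalerDr scalerA invrN mulNr mulVf ?lt_eqF // scaleN1r.
    rewrite p_posZE ?invr_gt0 // -mulrBr ler_pdivrMl //; nra.
  have [_] := gap _ _ (GV _ _ _ t0 Gxr).
  have -> : t^-1 *: x + z = t^-1 *: (x + t *: z).
    by rewrite scalerDr scalerA mulVf ?gt_eqF // scale1r.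
  rewrite p_posZE ?invr_gt0 // -mulrBr ler_pdivlMl //; nra.
- by move=> [x r] Gxr; exists x, r, 0; rewrite scale0r mul0r !addr0.
- by exists c, 0, 0, 1; rewrite scale1r mul1r !add0r.
Qed.

Theorem hahn_banach : exists f : V -> R, scalar f /\ forall x, f x <= p x.
Proof.
have [A [Adom Amax]] : exists A, dominated_subspace A /\
    forall B, A `<` B -> ~ dominated_subspace B.
  apply: Zorn_bigcup => F FP Ftot; split.
    move=> a x r y s [X FX Xx] [Y FY Yy].
    have [XY|YX] := Ftot _ _ FX FY.
      by exists Y => //; apply: (proj1 (FP _ FY)) => //; exact: XY.
    by exists X => //; apply: (proj1 (FP _ FX)) => //; exact: YX.
  by move=> x r [X FX Xx]; exact: (proj2 (FP _ FX)).
have A0 : A (0, 0).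
  have [[[x r] Axr]|A0] := pselect (exists q, A q).
    by have := (proj1 Adom) (-1) x r x r Axr Axr; rewrite scaleN1r mulN1r !addNr.
  exfalso; apply: (Amax [set (0, 0)]).
    split; first by move=> q Aq; exfalso; apply: A0; exists q.
    by move=> /(_ (0, 0)) h; apply: A0; exists (0, 0); exact: h.
  split; first by move=> a x r y s [-> ->] [-> ->]; rewrite scaler0 mulr0 !addr0.
  by move=> x r [-> ->]; rewrite p0.
have Atotal z : exists c, A (z, c).
  have [B [Bdom AB [c Bzc]]] := dominated_subspace_extend z Adom A0.
  exists c; apply: contrapT => nAzc; apply: (Amax B) => //; split => //.
  by move=> /(_ _ Bzc).
pose f z := proj1_sig (cid (Atotal z)).
have Af z : A (z, f z) by rewrite /f; case: cid.
exists f; split => [a u v|x]; last exact: (proj2 Adom) (Af x).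
exact: dominated_subspace_functional Adom (Af _) ((proj1 Adom) _ _ _ _ _ (Af u) (Af v)).
Qed.

End HahnBanach.

Section ConvexMinorant.
Variables (R : realType) (V : lmodType R) (G : set (V * R)).
Hypothesis G_convex : forall w s w' s' l, G (w, s) -> G (w', s') -> 0 < l < 1 ->
  G (l *: w + (1 - l) *: w', l * s + (1 - l) * s').
Hypothesis G_ge0 : forall s, G (0, s) -> 0 <= s.
Hypothesis G_absorbing : forall x, exists t s, 0 < t /\ G (t *: x, s).

Let slopes x := [set u | exists t s, 0 < t /\ G (t *: x, s) /\ u = s / t].

Let slopesD x y u v : slopes x u -> slopes y v -> slopes (x + y) (u + v).
Proof.
move=> [t [s [t0 [Gt ->]]]] [t' [s' [t'0 [Gt' ->]]]].
have tt0 : 0 < t + t' by rewrite addr_gt0.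
pose l := t' / (t + t').
have l01 : 0 < l < 1 by rewrite divr_gt0 //= ltr_pdivrMr // mul1r ltrDr.
have := G_convex Gt Gt' l01.
have -> : 1 - l = t / (t + t').
  by rewrite /l -[1](divff (lt0r_neq0 tt0)) -mulrBl addrK.
rewrite !scalerA => Gc.
exists (t * t' / (t + t')), (l * s + t / (t + t') * s'); split.
  by rewrite !mulr_gt0 // invr_gt0.
split; last by rewrite /l; field; rewrite !lt0r_neq0.
rewrite scalerDr; congr (G (_ + _, _)) : Gc.
  by rewrite /l; congr (_ *: _); rewrite mulrC mulrA.
by congr (_ *: _); rewrite mulrAC.
Qed.

Let slopes_lbound x : has_lbound (slopes x).
Proof.
have [t [s [t0 Gts]]] := G_absorbing (- x).
exists (- (s / t)) => u Pu.
have := slopesD Pu (ex_intro _ t (ex_intro _ s (conj t0 (conj Gts erefl)))).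
rewrite subrr => -[t' [s' [t'0 [+ e]]]]; rewrite scaler0 => /G_ge0 s'0.
have : 0 <= s' / t' by rewrite divr_ge0 // ltW.
lra.
Qed.

Let gauge x := inf (slopes x).

Let gauge_le x u : slopes x u -> gauge x <= u.
Proof. by move=> Pu; exact: ge_inf (slopes_lbound x) _ Pu. Qed.

Let slopes_neq0 x : slopes x !=set0.
Proof. by have [t [s [t0 Gts]]] := G_absorbing x; exists (s / t), t, s. Qed.

Let gauge_subadd x y : gauge (x + y) <= gauge x + gauge y.
Proof.
suff : gauge (x + y) - gauge y <= gauge x by lra.
apply: lb_le_inf => // u Pu; rewrite lerBlDr.
suff : gauge (x + y) - u <= gauge y by lra.
apply: lb_le_inf => // v Pv; rewrite lerBlDr addrC.
exact/gauge_le/slopesD.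
Qed.

Let gauge_posZ c x : 0 < c -> gauge (c *: x) <= c * gauge x.
Proof.
move=> c0; rewrite -ler_pdivrMl //.
apply: lb_le_inf => // _ [t [s [t0 [Gt ->]]]].
rewrite ler_pdivrMl // mulrCA; apply: gauge_le.
exists (t / c), s; split; first by rewrite divr_gt0.
split; first by rewrite scalerA mulrAC -mulrA mulfV ?gt_eqF // mulr1.
by rewrite invf_div.
Qed.

Lemma convex_linear_minorant :
  exists f : V -> R, scalar f /\ forall w s, G (w, s) -> f w <= s.
Proof.
have [f [flin fp]] := hahn_banach gauge_subadd gauge_posZ.
exists f; split => // w s Gws.
apply: (le_trans (fp w)); apply: gauge_le.
by exists 1, s; rewrite scale1r divr1.
Qed.

End ConvexMinorant.

Section TvsLinearForm.
Variables (R : realType) (E : tvsType R).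

Lemma nbhs0_absorbing (U : set E) : nbhs 0 U -> forall x, exists t, 0 < t /\ U (t *: x).
Proof.
move=> U0 x; have /= := scale_continuous ((0 : R^o), x) U.
rewrite scale0r => /(_ U0) [] /= B [B1 B2] BU.
move: B1 => /nbhs_ballP [e /= e0 He].
exists (e / 2); split; first by rewrite divr_gt0.
apply: (BU (e / 2 : R^o, x)); split => /=; last exact: nbhs_singleton.
apply: He; rewrite -ball_normE /= sub0r normrN gtr0_norm ?divr_gt0 //.
by rewrite ltr_pdivrMr // ltr_pMr // ltr1n.
Qed.

Lemma scalar_continuous (f : E -> R) (K : R) :
  scalar f -> (\forall w \near 0, f w <= K) -> continuous f.
Proof.
move=> flin fK x.
have f0 : f 0 = 0 by have := scalable_linear flin 0 0; rewrite scale0r /= mul0r.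
have K0 : 0 <= K by rewrite -f0; exact: nbhs_singleton fK.
have bounded0 : \forall w \near 0, `|f w| <= K.
  apply: filterS (filterI fK (nbhs0N fK)) => w [fwK [w' fw'K ew]].
  rewrite ler_norml fwK andbT -ew -[- w']add0r (zmod_morphism_linear flin) f0.
  by rewrite sub0r lerN2.
apply/cvgrPdist_le => e e0.
have K1 : 0 < K + 1 by rewrite ltr_wpDl.
have c0 : 0 < e / (K + 1) by rewrite divr_gt0.
apply: filterS (nbhsT x (nbhs0Z (lt0r_neq0 c0) bounded0)) => _ [_ [w fwK <-] <-].
rewrite (GRing.semilinear_linear flin).2 (scalable_linear flin) /= opprD addNKr normrN.
rewrite normrM (gtr0_norm c0); apply: le_trans (ler_wpM2l (ltW c0) fwK) _.
by rewrite mulrAC ler_pdivrMr // ler_pM2l // lerDl.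
Qed.

Lemma cvg_subl (x : E) : (fun w => x - w) @ 0 --> x.
Proof.
rewrite -[X in _ --> X](subr0 x).
exact: (@continuous2_cvg _ _ _ _ (nbhs (0 : E)) _ (fun=> x) id (fun a b : E => a - b)
  x 0 (@sub_continuous _ (x, 0)) (cvg_cst x) cvg_id).
Qed.

End TvsLinearForm.

Section Conjugate.
Variables (R : realType) (E F : tvsType R).
Implicit Types (f g : E * F -> \bar R) (a c : E -> R) (b d : F -> R).

Lemma conj2_ubound f a b u y : ((a u + b y)%:E - f (u, y) <= conj2 f a b)%E.
Proof. by apply: ereal_sup_ubound; exists (u, y). Qed.

Lemma conj2_gtNy f a b p : (f p < +oo)%E -> (-oo < conj2 f a b)%E.
Proof.
case: p => u y fp; apply: lt_le_trans (conj2_ubound f a b u y).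
by move: fp; case: (f (u, y)) => [r| |] //= _; rewrite ?ltNyr.
Qed.

Lemma fenchel_young f a b l u y :
  conj2 f a b = l%:E -> ((a u + b y - l)%:E <= f (u, y))%E.
Proof.
move=> fl; have := conj2_ubound f a b u y; rewrite fl.
case: (f (u, y)) => [r| |] //=; last by rewrite leey.
by rewrite !lee_fin; lra.
Qed.

Lemma conj2_le f a b (M : \bar R) : (forall p, (-oo < f p)%E) ->
  (forall u y r, f (u, y) = r%:E -> ((a u + b y - r)%:E <= M)%E) ->
  (conj2 f a b <= M)%E.
Proof.
move=> fgtNy fM; apply: ge_ereal_sup => _ [[u y] _ <-] /=.
move: (fgtNy (u, y)) (fM u y); case: (f (u, y)) => [r _ /(_ r erefl)| |] //.
by rewrite leNye.
Qed.

Lemma conj2D_le f g a b c d (l : R) :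
  (forall p, (-oo < f p)%E) -> (forall q, (-oo < g q)%E) ->
  (forall u y r v z s, f (u, y) = r%:E -> g (v, z) = s%:E ->
     a u + b y - r + (c v + d z - s) <= l) ->
  (conj2 f a b + conj2 g c d <= l%:E)%E.
Proof.
move=> fgtNy ggtNy fg.
have f_le v z s : g (v, z) = s%:E -> (conj2 f a b <= (l - (c v + d z - s))%:E)%E.
  move=> gs; apply: conj2_le => // u y r fr.
  by rewrite lee_fin; have := fg _ _ _ _ _ _ fr gs; lra.
have [[v [z [s gs]]]|gNfin] := pselect (exists v z s, g (v, z) = s%:E); last first.
  suff -> : conj2 g c d = -oo%E by rewrite addeNy leNye.
  apply/eqP; rewrite -leeNy_eq; apply: conj2_le => // v z s gs.
  by exfalso; apply: gNfin; exists v, z, s.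
case Ef : (conj2 f a b) (f_le _ _ _ gs) => [A| |] // _; last by rewrite addNye leNye.
have : (conj2 g c d <= (l - A)%:E)%E.
  apply: conj2_le => // v' z' s' gs'.
  by have := f_le _ _ _ gs'; rewrite Ef !lee_fin; lra.
case: (conj2 g c d) => [B| |] //; last by move=> _; rewrite addeNy leNye.
by rewrite -EFinD !lee_fin => ?; lra.
Qed.

Lemma infconv2_le (phi1 phi2 : E * F -> \bar R) x (y1 y2 : F) :
  (infconv2 phi1 phi2 (x, (y1 + y2)%R) <= phi1 (x, y1) + phi2 (x, y2))%E.
Proof. by apply: ereal_inf_lbound; exists y1, y2. Qed.

Lemma conj2_infconv2_le (phi1 phi2 : E * F -> \bar R) xs x1 x2 ys :
  (exists p, (phi1 p < +oo)%E) -> (exists p, (phi2 p < +oo)%E) ->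
  scalar ys -> (forall e, x1 e + x2 e = xs e) ->
  (conj2 (infconv2 phi1 phi2) xs ys <= conj2 phi1 x1 ys + conj2 phi2 x2 ys)%E.
Proof.
move=> [p1 /(conj2_gtNy x1 ys) c1gtNy] [p2 /(conj2_gtNy x2 ys) c2gtNy] ylin sum.
case E1 : (conj2 phi1 x1 ys) c1gtNy => [a1| |] // _; last first.
  by rewrite addye ?leey // -ltNye.
case E2 : (conj2 phi2 x2 ys) c2gtNy => [a2| |] // _; last by rewrite addey ?leey.
apply: ge_ereal_sup => _ [[u y] _ <-] /=.
have rho_ge : ((xs u + ys y - (a1 + a2))%:E <= infconv2 phi1 phi2 (u, y))%E.
  apply: le_ereal_inf_tmp => _ [y1 [y2 [/= <- ->]]].
  apply: le_trans (leeD (fenchel_young u y1 E1) (fenchel_young u y2 E2)).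
  by rewrite -EFinD lee_fin -sum (GRing.semilinear_linear ylin).2; lra.
apply: le_trans (leeB (lexx _) rho_ge) _.
by rewrite -EFinB lee_fin; lra.
Qed.

Lemma convex_ext_fin (f : E * F -> \bar R) p q r r' t :
  (forall p, (-oo < f p)%E) -> convex_ext f -> f p = r%:E -> f q = r'%:E -> 0 < t < 1 ->
  exists2 s, f (t *: p.1 + (1 - t) *: q.1, t *: p.2 + (1 - t) *: q.2) = s%:E &
    s <= t * r + (1 - t) * r'.
Proof.
move=> fgtNy fcvx fp fq t01; have := fcvx p q t t01.
have := fgtNy (t *: p.1 + (1 - t) *: q.1, t *: p.2 + (1 - t) *: q.2).
rewrite fp fq -!EFinM -EFinD; case: (f _) => [s| |] //= _.
by rewrite lee_fin; exists s.
Qed.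

End Conjugate.

Section StrongDuality.
Variables (R : realType) (E F : tvsType R) (phi1 phi2 : E * F -> \bar R).
Variables (xs : E -> R) (ys : F -> R) (l : R).
Hypotheses (phi1_gtNy : forall p, (-oo < phi1 p)%E) (phi2_gtNy : forall p, (-oo < phi2 p)%E).
Hypotheses (phi1_convex : convex_ext phi1) (phi2_convex : convex_ext phi2).
Hypotheses (xs_dual : is_dual xs) (ys_lin : scalar ys).
Hypothesis rho_conj : conj2 (infconv2 phi1 phi2) xs ys = l%:E.

Let gap := [set q : E * R | exists u ya r1 v yb r2, [/\ phi1 (u, ya) = r1%:E,
  phi2 (v, yb) = r2%:E, q.1 = u - v & r1 - ys ya + r2 - ys yb - xs v + l <= q.2]].

Let gap_convex w s w' s' t : gap (w, s) -> gap (w', s') -> 0 < t < 1 ->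
  gap (t *: w + (1 - t) *: w', t * s + (1 - t) * s').
Proof.
move=> [u [ya [r1 [v [yb [r2 [f1 f2 /= -> hs]]]]]]].
move=> [u' [ya' [r1' [v' [yb' [r2' [f1' f2' /= -> hs']]]]]]] t01.
have [r1'' f1'' le1] := convex_ext_fin phi1_gtNy phi1_convex f1 f1' t01.
have [r2'' f2'' le2] := convex_ext_fin phi2_gtNy phi2_convex f2 f2' t01.
exists (t *: u + (1 - t) *: u'), (t *: ya + (1 - t) *: ya'), r1''.
exists (t *: v + (1 - t) *: v'), (t *: yb + (1 - t) *: yb'), r2''; split => //=.
  by rewrite !scalerBr opprD addrACA.
rewrite !ys_lin !xs_dual.1 !(scalable_linear ys_lin) !(scalable_linear xs_dual.1) /=.
have [t0 t1] : 0 < t /\ 0 < 1 - t by move: t01 => /andP[? ?]; split; lra.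
have := ler_wpM2l (ltW t0) hs; have := ler_wpM2l (ltW t1) hs'; lra.
Qed.

Let gap_ge0 s : gap (0, s) -> 0 <= s.
Proof.
move=> [u [ya [r1 [v [yb [r2 [f1 f2 /= /esym/eqP + hs]]]]]]].
rewrite subr_eq0 => /eqP vu; subst v.
have := le_trans (fenchel_young u (ya + yb) rho_conj) (infconv2_le _ _ u ya yb).
by rewrite f1 f2 -EFinD lee_fin (GRing.semilinear_linear ys_lin).2; lra.
Qed.

Let gap_bounded x0 y0 y1 : (phi1 (x0, y1) < +oo)%E -> (phi2 (x0, y0) < +oo)%E ->
  (fun x => phi2 (x, y0)) @ x0 --> phi2 (x0, y0) ->
  exists K, \forall w \near 0, exists s, gap (w, s) /\ s <= K.
Proof.
move=> phi1_fin phi2_fin phi2_cont.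
have f1 : phi1 (x0, y1) = (fine (phi1 (x0, y1)))%:E by rewrite fineK // fin_numElt phi1_gtNy.
have f20 : phi2 (x0, y0) = (fine (phi2 (x0, y0)))%:E by rewrite fineK // fin_numElt phi2_gtNy.
set r1 := fine (phi1 (x0, y1)) in f1; set r2 := fine (phi2 (x0, y0)) in f20.
rewrite f20 in phi2_cont.
move/fine_cvgP: phi2_cont => [phi2_fin_near /cvgrPdist_lt/(_ 1 ltr01) phi2_near].
have /cvgrPdist_lt/(_ 1 ltr01) xs_near := xs_dual.2 x0.
exists (r1 - ys y1 + (r2 + 1) - ys y0 - xs x0 + 1 + l).
near=> w.
have f2 : phi2 (x0 - w, y0) = (fine (phi2 (x0 - w, y0)))%:E.
  by rewrite fineK //; near: w; exact: cvg_subl phi2_fin_near.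
have r2_near : `|r2 - fine (phi2 (x0 - w, y0))| < 1 by near: w; exact: cvg_subl phi2_near.
have xs_w : `|xs x0 - xs (x0 - w)| < 1 by near: w; exact: cvg_subl xs_near.
exists (r1 - ys y1 + fine (phi2 (x0 - w, y0)) - ys y0 - xs (x0 - w) + l); split.
  exists x0, y1, r1, (x0 - w), y0, (fine (phi2 (x0 - w, y0))); split => //=.
  by rewrite opprB addrCA subrr addr0.
by move: r2_near xs_w; rewrite !ltr_norml => /andP [? ?] /andP [? ?]; lra.
Unshelve. all: by end_near.
Qed.

Lemma conj2_sum_attained x0 y0 y1 : (phi1 (x0, y1) < +oo)%E -> (phi2 (x0, y0) < +oo)%E ->
  (fun x => phi2 (x, y0)) @ x0 --> phi2 (x0, y0) ->
  exists x1 x2 : E -> R, [/\ is_dual x1, is_dual x2, (forall e, x1 e + x2 e = xs e) &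
    (conj2 phi1 x1 ys + conj2 phi2 x2 ys <= l%:E)%E].
Proof.
move=> phi1_fin phi2_fin phi2_cont.
have [K gapK] := gap_bounded phi1_fin phi2_fin phi2_cont.
have gap_absorbing x : exists t s, 0 < t /\ gap (t *: x, s).
  by have [t [t0 [s [gs _]]]] := nbhs0_absorbing gapK x; exists t, s.
have [f [flin f_gap]] := convex_linear_minorant gap_convex gap_ge0 gap_absorbing.
have f_dual : is_dual f.
  split => //; apply: (scalar_continuous (K := K) flin).
  by apply: filterS gapK => w [s [/f_gap fs sK]]; exact: le_trans fs sK.
pose x2 e := xs e - f e.
have x2_dual : is_dual x2.
  split; first by move=> a u v; rewrite /x2 xs_dual.1 flin /=; ring.
  by move=> x; apply: cvgB; [exact: xs_dual.2 | exact: f_dual.2].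
exists f, x2; split => //; first by move=> e; rewrite /x2 addrC subrK.
apply: conj2D_le => // u ya r1 v yb r2 f1 f2.
have : f (u - v) <= r1 - ys ya + r2 - ys yb - xs v + l.
  by apply: f_gap; exists u, ya, r1, v, yb, r2.
by rewrite (zmod_morphism_linear flin) /x2 => ?; lra.
Qed.

End StrongDuality.

Unset Implicit Arguments.
Theorem theorem4p2 (R : realType) (E F : tvsType R)
  (hE : hausdorff_space E) (hF : hausdorff_space F)
  (phi1 phi2 : E * F -> \bar R) :
  proper_fun phi1 -> proper_fun phi2 ->
  convex_ext phi1 -> convex_ext phi2 ->
  (exists (x0 : E) (y0 : F),
      (phi2 (x0, y0) < +oo)%E /\
      (exists y : F, (phi1 (x0, y) < +oo)%E) /\
      (fun x : E => phi2 (x, y0)) @ x0 --> phi2 (x0, y0)) ->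
  forall (xs : E -> R) (ys : F -> R), is_dual xs -> is_dual ys ->
    let S := [set z : \bar R | exists x1 x2 : E -> R,
                 [/\ is_dual x1, is_dual x2, (forall e, x1 e + x2 e = xs e) &
                     z = (conj2 phi1 x1 ys + conj2 phi2 x2 ys)%E]] in
    conj2 (infconv2 phi1 phi2) xs ys = ereal_inf S /\
    (ereal_inf S \is a fin_num -> S (ereal_inf S)).
Proof.
move=> [_ phi1_gtNy] [_ phi2_gtNy] phi1_convex phi2_convex
  [x0 [y0 [phi2_fin [[y1 phi1_fin] phi2_cont]]]] xs ys xs_dual ys_dual S.
have rho_le_infS : (conj2 (infconv2 phi1 phi2) xs ys <= ereal_inf S)%E.
  apply: le_ereal_inf_tmp => _ [x1 [x2 [_ _ sum ->]]].
  by apply: conj2_infconv2_le ys_dual.1 sum; [exists (x0, y1) | exists (x0, y0)].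
have : (-oo < conj2 (infconv2 phi1 phi2) xs ys)%E.
  apply: (@conj2_gtNy _ _ _ _ xs ys (x0, (y1 + y0)%R)).
  exact: le_lt_trans (infconv2_le _ _ _ _ _) (lte_add_pinfty phi1_fin phi2_fin).
case rho: (conj2 _ xs ys) rho_le_infS => [l| |] // l_le_infS _; last first.
  by move: l_le_infS; rewrite leye_eq => /eqP ->.
have [x1 [x2 [x1_dual x2_dual sum le_l]]] := conj2_sum_attained phi1_gtNy phi2_gtNy
  phi1_convex phi2_convex xs_dual ys_dual.1 rho phi1_fin phi2_fin phi2_cont.
have Sx : S (conj2 phi1 x1 ys + conj2 phi2 x2 ys)%E by exists x1, x2.
have infS : ereal_inf S = l%:E.
  by apply/le_anti; rewrite l_le_infS andbT (le_trans (ereal_inf_lbound Sx)).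
split => // _; rewrite infS.
suff <- : (conj2 phi1 x1 ys + conj2 phi2 x2 ys)%E = l%:E by [].
by apply/le_anti; rewrite le_l -infS ereal_inf_lbound.
Qed.
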